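(* Consider any state (the tree held by some replica at some time in some execution) of FugueMax, respectively of Fugue, and let $\prec$ be its list order (the traversal order including tombstones). Then: (a) For any element $D$ in the state, the left origin of $D$ is obtained as follows: starting at $D$, walk up the tree until reaching a node that is a right child of its parent; the parent of that node is $D$'s left origin (the root corresponding to $\mathit{start}$). (b) For elements $A,B$ in the state with $A\prec B$: $B$ is a descendant of $A$ in the FugueMax (respectively Fugue) tree if and only if $B$ is a descendant of $A$ in the left-origin tree.
   Context: Replicated list model: a list is replicated over replicas with unique, totally ordered replica IDs. A replica may invoke $\mathsf{insert}(i,x)$ or $\mathsf{delete}(i)$; operations are applied locally immediately and disseminated by causal broadcast (every message eventually delivered everywhere; a message is delivered only after all messages delivered at its sender before it was sent; the sender delivers its own message immediately). The left origin of an element inserted by $\mathsf{insert}(i,x)$ is the element at index $i-1$ of the inserting replica's visible list at that time, or the symbol $\mathit{start}$ if $i=0$; the left-origin tree is the tree rooted at $\mathit{start}$ in which each element's parent is its left origin. Fugue: each replica's state is a tree with a root; each non-root node has a unique ID, a value (or tombstone $\bot$), a parent, and a side ($L$ or $R$); a node may have several left and several right children. IDs are pairs $(\text{replicaID},\text{counter})$ ordered lexicographically. Traversal of node $v$: traverse its left children in sibling order, visit $v$, traverse its right children in sibling order; in Fugue siblings of the same side are ordered by increasing ID. The traversal including tombstones of the whole tree gives the list order; the visible list consists of the nodes with value $\neq\bot$. $\mathsf{insert}(i,x)$: new ID $(\text{replicaID},\text{counter})$, increment counter; leftOrigin = node of the $(i-1)$-th visible element or the root if $i=0$; rightOrigin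 = node immediately after leftOrigin in the traversal including tombstones (or $\mathit{end}$ if none). If leftOrigin has no right child, the new node is a right child of leftOrigin, otherwise a left child of rightOrigin; the node is broadcast and each replica on delivery inserts it as the given child. $\mathsf{delete}(i)$: broadcast the ID of the $i$-th visible node; on delivery its value is set to $\bot$. FugueMax: identical to Fugue except that each right child also records its rightOrigin, and right-side siblings are ordered in the reverse of the list order of their right origins (sibling with the later right origin first, $\mathit{end}$ counting as later than every node), ties (equal right origins) broken by increasing ID. Left-side siblings are still ordered by increasing ID. *)

From Stdlib Require List.
From mathcomp Require Import all_boot.
Set Implicit Arguments.
Unset Strict Implicit.
Unset Printing Implicit Defensive.

(* Element IDs: (replicaID, counter), ordered lexicographically. *)
Definition ID := (nat * nat)%type.
Definition id_le (a b : ID) : bool :=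
  (a.1 < b.1) || ((a.1 == b.1) && (a.2 <= b.2)).

Inductive algo := Fugue | FugueMax.

(* A tree node.
   - nval  : Some x, or None for the tombstone.
   - npar  : parent; None denotes the root (start).
   - nside : true = right child, false = left child.
   - nro   : right origin recorded at insertion; None denotes [end].
   - nlo   : ghost field: the left origin computed at insertion (the element
             at index i-1 of the inserting replica's visible list, None = start).
             It is never used by the algorithm itself. *)
Record node (V : Type) := Node {
  nid : ID; nval : option V; npar : option ID; nside : bool;
  nro : option ID; nlo : option ID }.

Section Tree.
Variables (V : Type) (a : algo).
Implicit Types (S : seq (node V)) (L : seq ID).

Definition ro_pos L (o : option ID) : nat :=
  match o with None => size L | Some d => index d L end.

(* Sibling order ("n1 comes no later than n2") among siblings of the same side.
   FugueMax right siblings: reverse list order of right origins, ties by ID. *)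
Definition sib_le L (right : bool) : rel (node V) := fun n1 n2 =>
  if right && (if a is FugueMax then true else false) then
    (ro_pos L (nro n2) < ro_pos L (nro n1)) ||
    ((ro_pos L (nro n1) == ro_pos L (nro n2)) && id_le (nid n1) (nid n2))
  else id_le (nid n1) (nid n2).

Definition kids S L (p : option ID) (right : bool) : seq ID :=
  [seq nid n | n <- sort (sib_le L right)
                       [seq n <- S | (npar n == p) && (nside n == right)]].

Fixpoint trav S L (k : nat) (p : option ID) : seq ID :=
  match k with
  | 0 => [::]
  | k'.+1 =>
      flatten [seq trav S L k' (Some c) | c <- kids S L p false]
      ++ (if p is Some v then [:: v] else [::])
      ++ flatten [seq trav S L k' (Some c) | c <- kids S L p true]
  end.

(* L is the list order of tree S: the traversal of the whole tree, where (for
   FugueMax) right siblings are ordered using the positions in L itself of their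
   right origins. *)
Definition is_list_order S L : Prop := L = trav S L (size S).+1 None.

Definition visible S (d : ID) : bool :=
  has (fun n => (nid n == d) && isSome (nval n)) S.

Definition mk_insert S L (r c i : nat) (x : V) : node V :=
  let vis := [seq d <- L | visible S d] in
  let lo := if i is i'.+1 then Some (nth (0,0) vis i') else None in
  let ro := match lo with
            | None => ohead L
            | Some d => ohead (drop (index d L).+1 L) end in
  let hasR := has (fun n => (npar n == lo) && nside n) S in
  {| nid := (r, c); nval := Some x;
     npar := if hasR then ro else lo; nside := ~~ hasR;
     nro := ro; nlo := lo |}.

Definition tombstone S (d : ID) : seq (node V) :=
  [seq if nid n == d then {| nid := nid n; nval := None; npar := npar n;
        nside := nside n; nro := nro n; nlo := nlo n |} else n | n <- S].

End Tree.

Inductive msg (V : Type) := MIns of node V | MDel of ID.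

Record rstate (V : Type) := RState {
  rtree : seq (node V); rcnt : nat; rdlv : seq nat (* delivered msg indices *) }.

(* Global configuration: list of all sent messages, each with the indices of the
   messages delivered at its sender before it was sent; and replica states. *)
Record config (V : Type) := Config {
  csent : seq (msg V * seq nat); crep : nat -> rstate V }.

Definition apply_msg V (S : seq (node V)) (m : msg V) : seq (node V) :=
  match m with MIns n => rcons S n | MDel d => tombstone S d end.

Definition upd V (f : nat -> rstate V) (r : nat) (s : rstate V) :=
  fun r' => if r' == r then s else f r'.

Definition init_config (V : Type) : config V :=
  {| csent := [::]; crep := fun _ => {| rtree := [::]; rcnt := 0; rdlv := [::] |} |}.

(* One step of an execution: a local insert/delete at some replica (applied
   locally and broadcast; the sender delivers it immediately), or a causal
   delivery of a sent message at some replica. *)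
Inductive step V (a : algo) : config V -> config V -> Prop :=
| StInsert (c : config V) r i (x : V) L :
    let st := crep c r in
    is_list_order a (rtree st) L ->
    i <= size [seq d <- L | visible (rtree st) d] ->
    let n := mk_insert (rtree st) L r (rcnt st) i x in
    step a c {| csent := rcons (csent c) (MIns n, rdlv st);
                crep := upd (crep c) r {| rtree := rcons (rtree st) n;
                                         rcnt := (rcnt st).+1;
                                         rdlv := rcons (rdlv st) (size (csent c)) |} |}
| StDelete (c : config V) r i L :
    let st := crep c r in
    is_list_order a (rtree st) L ->
    let vis := [seq d <- L | visible (rtree st) d] in
    i < size vis ->
    let d := nth (0,0) vis i in
    step a c {| csent := rcons (csent c) (MDel V d, rdlv st);
                crep := upd (crep c) r {| rtree := tombstone (rtree st) d;
                                         rcnt := rcnt st;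
                                         rdlv := rcons (rdlv st) (size (csent c)) |} |}
| StDeliver (c : config V) r k :
    let st := crep c r in
    k < size (csent c) -> k \notin rdlv st ->
    let e := nth (MDel V (0,0), [::]) (csent c) k in
    all (fun j => j \in rdlv st) e.2 ->
    step a c {| csent := csent c;
                crep := upd (crep c) r {| rtree := apply_msg (rtree st) e.1;
                                         rcnt := rcnt st;
                                         rdlv := rcons (rdlv st) k |} |}.

Inductive reachable V (a : algo) : config V -> Prop :=
| reach_init : reachable a (init_config V)
| reach_step c c' : reachable a c -> step a c c' -> reachable a c'.

Inductive lo_walk V (S : seq (node V)) : ID -> option ID -> Prop :=
| walk_right n : List.In n S -> nside n = true -> lo_walk S (nid n) (npar n)
| walk_left n y p : List.In n S -> nside n = false -> npar n = Some y ->
    lo_walk S y p -> lo_walk S (nid n) p.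

(* b is a (proper) descendant of a in the tree given by the parent map par
   (npar for the Fugue tree, nlo for the left-origin tree). *)
Inductive desc V (par : node V -> option ID) (S : seq (node V)) (a : ID) : ID -> Prop :=
| desc_child n : List.In n S -> par n = Some a -> desc par S a (nid n)
| desc_step n y : List.In n S -> par n = Some y -> desc par S a y -> desc par S a (nid n).

Definition before (L : seq ID) (x y : ID) : Prop :=
  x \in L /\ y \in L /\ index x L < index y L.

From Stdlib Require List.
From mathcomp Require Import all_boot.
Set Implicit Arguments. Unset Strict Implicit. Unset Printing Implicit Defensive.

(* A new node with left origin lo becomes a right child of lo if lo has no right child
   yet, and otherwise a left child of its right origin, the node following lo in the
   traversal.  That node is the first node of the subtree of the first right child c of
   lo, reached from c through left children only; so the walk up from the new node ends
   at c, a right child of lo, and (a) holds when the node is created.  Walks only read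
   ids, parents and sides, which deletions do not touch and later insertions do not
   change, and causal delivery ensures that a receiver's tree contains the sender's tree
   at sending time; hence (a) is an invariant of every replica.

   For (b), (a) makes the left origin of a node one of its tree ancestors, so left-origin
   descendants are tree descendants.  Conversely, let B descend from A with A before B.
   Left subtrees precede their root in the traversal, so B lies in a right subtree of A;
   the walk from B then stops at A or at a strictly earlier node of the same right
   subtree, and induction on the position in the node sequence concludes. *)

Lemma In_mem (T : eqType) (x : T) s : List.In x s <-> x \in s.
Proof.
elim: s => [|y s IH] //=; rewrite in_cons; split.
- by case=> [->|/IH ->]; rewrite ?eqxx ?orbT.
- by case/orP=> [/eqP->|/IH]; auto.
Qed.

Lemma mem_map_In (T : Type) (U : eqType) (f : T -> U) y s :
  y \in map f s <-> exists x, f x = y /\ List.In x s.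
Proof. by split=> [/In_mem/List.in_map_iff | /List.in_map_iff/In_mem]. Qed.

Lemma In_map_mem (T : Type) (U : eqType) (f : T -> U) x s :
  List.In x s -> f x \in map f s.
Proof. by move=> xs; apply/mem_map_In; exists x. Qed.

Lemma In_nth (T : Type) (x0 : T) s i : i < size s -> List.In (nth x0 s i) s.
Proof. by elim: s i => [|y s IH] [|i] //= lt_i_s; [left | right; apply: IH]. Qed.

Lemma In_nthP (T : Type) (y : T) s :
  List.In y s -> exists2 i, i < size s & nth y s i = y.
Proof.
elim: s => [//|z s IH] /= [<-|/IH [i lt_i_s nth_i]]; first by exists 0.
by exists i.+1.
Qed.

Lemma In_sort (T : Type) (r : rel T) s y : List.In y (sort r s) <-> List.In y s.
Proof.
rewrite -{1}(mkseq_nth y s) /mkseq sort_map; split.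
- case/List.in_map_iff=> i [<- /In_mem]; rewrite mem_sort mem_iota => /andP [_].
  exact: In_nth.
- move=> ys; have [i lt_i_s nth_i] := In_nthP ys.
  apply/List.in_map_iff; exists i; split=> //.
  by apply/In_mem; rewrite mem_sort mem_iota.
Qed.

Lemma In_rcons (T : Type) (s : seq T) x y :
  List.In y (rcons s x) <-> List.In y s \/ y = x.
Proof.
elim: s => [|z s IH] /=; first by split=> [[->|[]]|[[]|->]]; auto.
split=> [[<-|yr]|[[<-|ys]|yx]]; auto.
- by case/IH: yr; auto.
- by right; apply/IH; left.
- by right; apply/IH; right.
Qed.

Lemma map_uniq_In_inj (T : Type) (U : eqType) (f : T -> U) s x y :
  uniq (map f s) -> List.In x s -> List.In y s -> f x = f y -> x = y.
Proof.
elim: s => [|z s IH] //= /andP [fz_notin uniq_s] [<-|xs] [<-|ys] fxy //.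
- by move: fz_notin; rewrite fxy (In_map_mem f ys).
- by move: fz_notin; rewrite -fxy (In_map_mem f xs).
- exact: IH.
Qed.

Section Traversal.
Variables (V : Type) (a : algo) (S : seq (node V)) (L : seq ID).
Local Notation ids := (map (@nid V) S).
Local Notation kids := (kids a S L).
Local Notation trav := (trav a S L).

Definition forest k p right := flatten [seq trav k (Some c) | c <- kids p right].

Lemma trav_succ k p : trav k.+1 p =
  forest k p false ++ (if p is Some v then [:: v] else [::]) ++ forest k p true.
Proof. by []. Qed.

Lemma mem_kids p right c : c \in kids p right <->
  exists2 n, List.In n S & [/\ npar n = p, nside n = right & nid n = c].
Proof.
rewrite mem_map_In; split.
- case=> n [<- /In_sort /List.filter_In [nS /andP [/eqP par_n /eqP side_n]]].
  by exists n.
- case=> n nS [par_n side_n <-]; exists n; split=> //.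
  by apply/In_sort/List.filter_In; rewrite par_n side_n !eqxx.
Qed.

Lemma mem_forest k p right c x :
  c \in kids p right -> x \in trav k (Some c) -> x \in forest k p right.
Proof. by move=> ckid xc; apply/flatten_mapP; exists c. Qed.

Lemma mem_trav_kid k p right c x :
  c \in kids p right -> x \in trav k (Some c) -> x \in trav k.+1 p.
Proof.
move=> ckid /(mem_forest ckid) xf; rewrite trav_succ !mem_cat.
by case: right ckid xf => _ ->; rewrite ?orbT.
Qed.

Inductive tpath : option ID -> ID -> nat -> Prop :=
| tpath0 v : tpath (Some v) v 0
| tpathS n p x m : List.In n S -> npar n = p -> tpath (Some (nid n)) x m -> tpath p x m.+1.

Lemma mem_trav_tpath p x m k : tpath p x m -> m < k -> x \in trav k p.
Proof.
move=> path_x; elim: path_x k => [v|n p' x' m' nS par_n _ IH] [|k] // lt_m_k.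
- by rewrite trav_succ !mem_cat mem_seq1 eqxx orbT.
- by apply: (@mem_trav_kid k p' (nside n) (nid n)); [apply/mem_kids; exists n | exact: IH].
Qed.

(* [trav] is fuel-bounded; fuel [k] suffices for the subtree at [p]. *)
Definition height_lt k p := forall x m, tpath p x m -> m < k.

Lemma height_lt_kid k p right c : height_lt k.+1 p -> c \in kids p right -> height_lt k (Some c).
Proof. by move=> hp /mem_kids [n nS [par_n _ <-]] x m /(tpathS nS par_n) /hp. Qed.

Definition parents_before := forall n, List.In n S -> forall p,
  npar n = Some p -> index p ids < index (nid n) ids.

Lemma parent_mem n p : parents_before -> List.In n S -> npar n = Some p -> p \in ids.
Proof.
move=> parents_first nS par_n; rewrite -index_mem.
by apply: ltn_trans (parents_first n nS p par_n) _; rewrite index_mem In_map_mem.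
Qed.

Definition root_kids_right := forall n, List.In n S -> npar n = None -> nside n.

Lemma tpath_index v x m : parents_before -> v \in ids -> tpath (Some v) x m ->
  x \in ids /\ index v ids + m <= index x ids.
Proof.
move=> parents_first + path_x; move e: (Some v) path_x => p path_x.
elim: path_x v e => [w|n p' x' m' nS par_n _ IH] v e vS.
  by case: e => <-; rewrite addn0.
rewrite -e in par_n; have [-> le_n_x] := IH (nid n) erefl (In_map_mem _ nS); split=> //.
by rewrite addnS; apply: leq_trans le_n_x; rewrite ltn_add2r parents_first.
Qed.

Lemma height_root : parents_before -> height_lt (size S).+1 None.
Proof.
move=> parents_first x m path_x.
case: path_x (erefl (@None ID)) => // n _ x' m' nS _ path_x _.
have [x_in le_m_x] := tpath_index parents_first (In_map_mem _ nS) path_x.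
rewrite ltnS; apply: leq_ltn_trans (leq_addl (index (nid n) ids) m') _.
by apply: leq_ltn_trans le_m_x _; rewrite -(size_map (@nid V)) index_mem.
Qed.

Definition side_desc right x y := exists2 n, List.In n S &
  [/\ npar n = Some x, nside n = right & exists m, tpath (Some (nid n)) y m].

Definition left_desc_precede (s : seq ID) := forall x y,
  side_desc false x y -> x \in s -> y \in s /\ index y s < index x s.

Lemma index_catl (s1 s2 : seq ID) x y : x \in s1 -> y \in s1 ->
  index y s1 < index x s1 -> index y (s1 ++ s2) < index x (s1 ++ s2).
Proof. by move=> x_in y_in; rewrite !index_cat x_in y_in. Qed.

Lemma index_catr (s1 s2 : seq ID) x y : x \notin s1 ->
  index y s2 < index x s2 -> index y (s1 ++ s2) < index x (s1 ++ s2).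
Proof.
move=> x_notin lt_yx; rewrite !index_cat (negbTE x_notin); case: ifP => [y_in|_].
- by apply: leq_trans (leq_addr _ _); rewrite index_mem.
- by rewrite ltn_add2l.
Qed.

Lemma left_desc_precede_cat s1 s2 :
  left_desc_precede s1 -> left_desc_precede s2 -> left_desc_precede (s1 ++ s2).
Proof.
move=> prec1 prec2 x y xy x_in12; case x_in: (x \in s1).
- have [y_in lt_yx] := prec1 x y xy x_in.
  by rewrite mem_cat y_in; split=> //; apply: index_catl.
- have x_in2 : x \in s2 by move: x_in12; rewrite mem_cat x_in.
  have [y_in lt_yx] := prec2 x y xy x_in2.
  by rewrite mem_cat y_in orbT; split=> //; apply: index_catr lt_yx; rewrite x_in.
Qed.

Lemma left_desc_precede_flatten (l : seq ID) (f : ID -> seq ID) :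
  {in l, forall c, left_desc_precede (f c)} -> left_desc_precede (flatten (map f l)).
Proof.
elim: l => [|c l IH] prec /=; first by move=> x y.
apply: left_desc_precede_cat; first by apply: prec; rewrite mem_head.
by apply: IH => d d_in; apply: prec; rewrite in_cons d_in orbT.
Qed.

Lemma trav_left_desc_precede k p : height_lt k p -> left_desc_precede (trav k p).
Proof.
elim: k p => [|k IH] p hp; first by move=> x y.
have forest_prec right : left_desc_precede (forest k p right).
  by apply: left_desc_precede_flatten => c /(height_lt_kid hp); apply: IH.
rewrite trav_succ; case: p hp forest_prec => [v|] hp forest_prec; last first.
  by apply: left_desc_precede_cat; apply: forest_prec.
set FL := forest k _ false; set FR := forest k _ true.
move=> x y xy x_in; case x_inl: (x \in FL).
  have [y_in lt_yx] := forest_prec false x y xy x_inl.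
  by rewrite mem_cat y_in; split=> //; apply: index_catl.
have [x_v|x_nv] := eqVneq x v.
- subst x; have y_inl : y \in FL.
    case: xy => n nS [par_n side_n [m path_y]].
    apply: (@mem_forest k _ _ (nid n)); first by apply/mem_kids; exists n.
    exact: mem_trav_tpath path_y (hp _ _ (tpathS nS par_n path_y)).
  rewrite mem_cat y_inl; split=> //.
  by rewrite !index_cat y_inl x_inl ltn_addr // index_mem.
- have x_inr : x \in FR by move: x_in; rewrite !mem_cat mem_seq1 x_inl (negbTE x_nv).
  have [y_in lt_yx] := forest_prec true x y xy x_inr.
  rewrite !mem_cat mem_seq1 y_in !orbT; split=> //.
  apply: index_catr; first by rewrite x_inl.
  by rewrite /= (eq_sym v x) (negbTE x_nv); case: (v == y).
Qed.

Lemma mem_trav k p x : x \in trav k p -> p = Some x \/ x \in ids.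
Proof.
elim: k p => [|k IH] p //.
have forest_ids right : x \in forest k p right -> x \in ids.
  case/flatten_mapP=> c /mem_kids [n nS [_ _ <-]] /IH [[<-]|//].
  exact: In_map_mem.
rewrite trav_succ !mem_cat => /orP [/forest_ids|/orP [|/forest_ids]]; auto.
by case: p {forest_ids} => // v; rewrite mem_seq1 => /eqP ->; left.
Qed.

Definition splits_at d (s : seq ID) := exists k X Y,
  [/\ s = X ++ d :: forest k (Some d) true ++ Y, d \notin X & height_lt k.+1 (Some d)].

Lemma splits_at_catl d s1 s2 : splits_at d s1 -> splits_at d (s1 ++ s2).
Proof.
case=> k [X [Y [-> d_notin hd]]]; exists k, X, (Y ++ s2); split=> //.
by rewrite -catA /= -catA.
Qed.

Lemma splits_at_catr d s1 s2 : d \notin s1 -> splits_at d s2 -> splits_at d (s1 ++ s2).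
Proof.
move=> d_notin1 [k [X [Y [-> d_notin hd]]]]; exists k, (s1 ++ X), Y.
by rewrite catA mem_cat negb_or d_notin1 d_notin.
Qed.

Lemma splits_at_flatten d (l : seq ID) (f : ID -> seq ID) :
  {in l, forall c, d \in f c -> splits_at d (f c)} ->
  d \in flatten (map f l) -> splits_at d (flatten (map f l)).
Proof.
elim: l => [|c l IH] //= split_f; rewrite mem_cat.
case: (boolP (d \in f c)) => [d_in _|d_nin d_inl].
  by apply/splits_at_catl/split_f; rewrite ?mem_head.
apply: splits_at_catr d_nin _.
by apply: IH d_inl => c' c'_in; apply: split_f; rewrite in_cons c'_in orbT.
Qed.

Lemma trav_splits_at k p d : height_lt k p -> d \in trav k p -> splits_at d (trav k p).
Proof.
elim: k p => [|k IH] p hp //.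
have forest_split right : d \in forest k p right -> splits_at d (forest k p right).
  apply: splits_at_flatten => c c_kid; apply: IH; exact: height_lt_kid hp c_kid.
rewrite trav_succ => d_in.
have [d_inl|d_ninl] := boolP (d \in forest k p false).
  by apply/splits_at_catl/forest_split.
rewrite mem_cat (negbTE d_ninl) in d_in; apply: splits_at_catr d_ninl _.
case: p hp forest_split d_in => [v|] hp forest_split d_in; last exact: forest_split.
have [d_v|d_nv] := eqVneq d v; first by subst v; exists k, [::], [::]; rewrite cats0.
apply: (@splits_at_catr _ [:: v]); first by rewrite mem_seq1.
by apply: forest_split; move: d_in; rewrite mem_cat mem_seq1 (negbTE d_nv).
Qed.

Lemma forest0 p right : forest 0 p right = [::].
Proof. by rewrite /forest; elim: (kids p right). Qed.

Lemma forest_cons k p right c l : kids p right = c :: l ->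
  forest k p right = trav k (Some c) ++ flatten [seq trav k (Some c') | c' <- l].
Proof. by rewrite /forest => ->. Qed.

Lemma trav_head_walk k c p : 0 < k -> lo_walk S c p ->
  exists y rest, trav k (Some c) = y :: rest /\ lo_walk S y p.
Proof.
elim: k c => [|k IH] c // _ walk_c; rewrite trav_succ.
case: k IH => [|k] IH; first by rewrite forest0; exists c, (forest 0 (Some c) true).
case kids_c: (kids (Some c) false) => [|c1 l].
  by rewrite /forest kids_c; exists c, (forest k.+1 (Some c) true).
have /mem_kids [n1 n1S [par_n1 side_n1 id_n1]] : c1 \in kids (Some c) false.
  by rewrite kids_c mem_head.
have [y [rest [trav_c1 walk_y]]] := IH _ isT (walk_left n1S side_n1 par_n1 walk_c).
by exists y; rewrite (forest_cons _ kids_c) -id_n1 trav_c1; eexists.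
Qed.

Lemma forest_head_walk k p : 0 < k ->
  (exists2 n, List.In n S & npar n = p /\ nside n) ->
  exists y rest, forest k p true = y :: rest /\ lo_walk S y p.
Proof.
move=> k_gt0 [n nS [par_n side_n]].
have : nid n \in kids p true by apply/mem_kids; exists n.
case kids_p: (kids p true) => [|c1 l] // _.
have /mem_kids [n1 n1S [par_n1 side_n1 id_n1]] : c1 \in kids p true.
  by rewrite kids_p mem_head.
have [y [rest [trav_c1 walk_y]]] := trav_head_walk k_gt0 (walk_right n1S side_n1).
by exists y; rewrite (forest_cons _ kids_p) -id_n1 trav_c1 -par_n1; eexists.
Qed.

End Traversal.

Definition next_in (L : seq ID) (lo : option ID) : option ID :=
  if lo is Some d then ohead (drop (index d L).+1 L) else ohead L.

Section ListOrder.
Variables (V : Type) (a : algo) (S : seq (node V)) (L : seq ID).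
Hypotheses (list_order : is_list_order a S L) (parents_first : parents_before S).

Lemma forest_root_left k : root_kids_right S -> forest a S L k None false = [::].
Proof.
move=> roots; rewrite /forest.
case kids_root: (kids a S L None false) => [//|c l].
have /mem_kids [n nS [par_n side_n _]] : c \in kids a S L None false.
  by rewrite kids_root mem_head.
by move: (roots n nS par_n); rewrite side_n.
Qed.

Lemma next_in_walk lo : root_kids_right S ->
  (forall d, lo = Some d -> d \in L) ->
  (exists2 n, List.In n S & npar n = lo /\ nside n) ->
  exists y, next_in L lo = Some y /\ lo_walk S y lo.
Proof.
move=> root_right + has_right; case: lo has_right => [d|] has_right lo_in /=.
- have := lo_in d erefl; rewrite {1}list_order => {}lo_in.
  have [k [X [Y [L_eq d_notin hd]]]] := trav_splits_at (height_root parents_first) lo_in.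
  rewrite -list_order in L_eq.
  have k_gt0 : 0 < k.
    case: has_right => n nS [par_n _].
    by have := hd _ _ (tpathS nS par_n (tpath0 _ _)).
  have [y [rest [forest_eq walk_y]]] := forest_head_walk a L k_gt0 has_right.
  exists y; split=> //.
  by rewrite L_eq index_cat (negbTE d_notin) /= eqxx addn0 -cat_rcons drop_size_cat
    ?size_rcons // forest_eq.
- have S_gt0 : 0 < size S by case: has_right; case: (S).
  have [y [rest [forest_eq walk_y]]] := forest_head_walk a L S_gt0 has_right.
  by exists y; rewrite list_order trav_succ forest_root_left //= forest_eq.
Qed.

Lemma left_desc_before x y : side_desc S false x y -> x \in L -> index y L < index x L.
Proof.
have prec : left_desc_precede S L.
  by rewrite {1}list_order; apply: trav_left_desc_precede (height_root parents_first).
by move=> xy /(prec x y xy) [].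
Qed.

End ListOrder.

Definition lo_walks V (S : seq (node V)) :=
  forall D, List.In D S -> lo_walk S (nid D) (nlo D).

Section Descendants.
Variables (V : Type) (S : seq (node V)).
Local Notation ids := (map (@nid V) S).

Lemma lo_walk_mem y p : lo_walk S y p -> y \in ids.
Proof. by case=> [n nS _|n y' p' nS _ _ _]; apply: In_map_mem. Qed.

Lemma lo_walk_desc y z : lo_walk S y (Some z) -> desc (@npar V) S z y.
Proof.
move e: (Some z) => p walk_y; elim: walk_y e => [n nS _|n y' p' nS _ par_n _ IH] e.
- exact: desc_child nS (esym e).
- exact: desc_step nS par_n (IH e).
Qed.

Lemma desc_trans (par : node V -> option ID) x y z :
  desc par S x y -> desc par S y z -> desc par S x z.
Proof.
move=> xy; elim=> [n nS par_n|n y' nS par_n _ IH].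
- exact: desc_step nS par_n xy.
- exact: desc_step nS par_n IH.
Qed.

Lemma desc_nlo_npar x y : lo_walks S -> desc (@nlo V) S x y -> desc (@npar V) S x y.
Proof.
move=> walks; elim=> [n nS lo_n|n y' nS lo_n _ IH].
- by apply: lo_walk_desc; rewrite -lo_n; apply: walks.
- by apply: desc_trans IH (lo_walk_desc _); rewrite -lo_n; apply: walks.
Qed.

Lemma tpath0P v x : tpath S (Some v) x 0 -> x = v.
Proof. by inversion 1. Qed.

Lemma tpathSP p x m : tpath S p x m.+1 ->
  exists2 n, List.In n S & npar n = p /\ tpath S (Some (nid n)) x m.
Proof. by inversion 1; exists n. Qed.

Lemma tpath_rcons p y m n : tpath S p y m -> List.In n S -> npar n = Some y ->
  tpath S p (nid n) m.+1.
Proof.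
elim=> [v|n' p' x m' n'S par_n' _ IH] nS par_n.
- exact: tpathS nS par_n (tpath0 _ _).
- exact: tpathS n'S par_n' (IH nS par_n).
Qed.

Lemma tpath_last v x m : tpath S (Some v) x m.+1 ->
  exists2 n, List.In n S & nid n = x /\ exists2 z, npar n = Some z & tpath S (Some v) z m.
Proof.
elim: m v => [|m IH] v /tpathSP [n nS [par_n path_x]].
- by exists n => //; split; [rewrite (tpath0P path_x) | exists v => //; apply: tpath0].
- have [n' n'S [id_n' [z par_n' path_z]]] := IH _ path_x.
  by exists n' => //; split=> //; exists z => //; apply: tpathS nS par_n path_z.
Qed.

Lemma desc_tpath x y : desc (@npar V) S x y ->
  exists2 n, List.In n S & npar n = Some x /\ exists m, tpath S (Some (nid n)) y m.
Proof.
elim=> [n nS par_n|n y' nS par_n _ [n0 n0S [par_n0 [m path_y]]]].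
- by exists n => //; split=> //; exists 0; apply: tpath0.
- by exists n0 => //; split=> //; exists m.+1; apply: tpath_rcons path_y nS par_n.
Qed.

Hypotheses (ids_uniq : uniq ids) (parents_first : parents_before S).

Lemma side_desc_mem right x y : side_desc S right x y -> y \in ids.
Proof.
by case=> n nS [_ _ [m /(tpath_index parents_first (In_map_mem _ nS)) []]].
Qed.

Lemma lo_walk_side_desc x y p : lo_walk S y p -> side_desc S true x y ->
  p = Some x \/ exists2 z, p = Some z & side_desc S true x z /\ index z ids < index y ids.
Proof.
elim=> [n nS side_n|n y' p' nS side_n par_n _ IH] [n0 n0S [par_n0 side_n0 [[|m] path]]].
- by rewrite (map_uniq_In_inj ids_uniq nS n0S (tpath0P path)) par_n0; left.
- have [n' n'S [id_n' [z par_n' path_z]]] := tpath_last path.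
  rewrite (map_uniq_In_inj ids_uniq n'S nS id_n') in par_n'.
  rewrite par_n'; right; exists z => //.
  split; first by exists n0 => //; split=> //; exists m.
  exact: parents_first nS _ par_n'.
- by move: side_n0; rewrite -(map_uniq_In_inj ids_uniq nS n0S (tpath0P path)) side_n.
- have [n' n'S [id_n' [z par_n' path_z]]] := tpath_last path.
  move: par_n' path_z; rewrite (map_uniq_In_inj ids_uniq n'S nS id_n') par_n => -[<-] path_y'.
  have lt_y'n : index y' ids < index (nid n) ids by apply: parents_first nS _ par_n.
  case: IH => [|->|[z' -> [desc_z' lt_z'y']]]; [|by left|].
    by exists n0 => //; split=> //; exists m.
  by right; exists z' => //; split=> //; apply: ltn_trans lt_z'y' lt_y'n.
Qed.

Lemma side_desc_nlo x y : lo_walks S -> side_desc S true x y -> desc (@nlo V) S x y.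
Proof.
move=> walks; move: {2}(index y ids).+1 (ltnSn (index y ids)) => N.
elim: N y => [|N IH] y // lt_yN xy.
have /mem_map_In [D [id_D DS]] := side_desc_mem xy.
have := walks D DS; rewrite id_D => /lo_walk_side_desc/(_ xy) [lo_D|[z lo_D [xz lt_zy]]].
- by rewrite -id_D; apply: desc_child DS lo_D.
- rewrite -id_D; apply: desc_step DS lo_D (IH z _ xz).
  by apply: leq_trans lt_zy _; rewrite -ltnS.
Qed.

End Descendants.

Record tree_inv V (S : seq (node V)) : Prop := TreeInv {
  tree_uniq : uniq (map (@nid V) S);
  tree_parents : parents_before S;
  tree_roots : root_kids_right S;
  tree_walks : lo_walks S }.

Lemma tree_desc_npar_nlo V a (S : seq (node V)) L A B :
  tree_inv S -> is_list_order a S L -> before L A B ->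
  desc (@npar V) S A B <-> desc (@nlo V) S A B.
Proof.
case=> ids_uniq parents_first _ walks list_order [A_in [_ lt_AB]].
split; last exact: desc_nlo_npar.
case/desc_tpath=> n nS [par_n path_B]; case side_n: (nside n).
- by apply: (side_desc_nlo ids_uniq parents_first walks); exists n.
- have AB : side_desc S false A B by exists n.
  by have := ltn_trans lt_AB (left_desc_before list_order parents_first AB A_in); rewrite ltnn.
Qed.

Section Skeleton.
Variable V : Type.
Implicit Types (S : seq (node V)) (n m : node V).

(* Tombstoning preserves skeletons, and walks and descendants only depend on them. *)
Definition skel n := (nid n, npar n, nside n, nlo n).

Lemma ids_skel S : map (@nid V) S = map (fun k => k.1.1.1) (map skel S).
Proof. by rewrite -map_comp. Qed.

Lemma skel_In S1 S2 n : {subset map skel S1 <= map skel S2} -> List.In n S1 ->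
  exists2 m, List.In m S2 & skel m = skel n.
Proof. by move=> sub /(In_map_mem skel)/sub/mem_map_In [m [? ?]]; exists m. Qed.

Lemma lo_walk_mono S1 S2 x p : {subset map skel S1 <= map skel S2} ->
  lo_walk S1 x p -> lo_walk S2 x p.
Proof.
move=> sub; elim=> [n nS side_n|n y p' nS side_n par_n _ IH].
- have [m mS [<- <- side_m _]] := skel_In sub nS.
  by apply: walk_right mS _; rewrite side_m.
- have [m mS [<- par_m side_m _]] := skel_In sub nS.
  by apply: walk_left mS _ _ IH; rewrite ?side_m ?par_m.
Qed.

Lemma tree_inv_skel S1 S2 : map skel S1 = map skel S2 -> tree_inv S1 -> tree_inv S2.
Proof.
move=> skel_eq [uniq1 parents1 roots1 walks1].
have ids_eq : map (@nid V) S1 = map (@nid V) S2 by rewrite !ids_skel skel_eq.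
have sub21 : {subset map skel S2 <= map skel S1} by rewrite skel_eq.
have sub12 : {subset map skel S1 <= map skel S2} by rewrite skel_eq.
split; first by rewrite -ids_eq.
- move=> n nS p; have [m mS [<- <- _ _]] := skel_In sub21 nS.
  by rewrite -ids_eq; apply: parents1.
- move=> n nS; have [m mS [_ <- <- _]] := skel_In sub21 nS; exact: roots1.
- move=> n nS; have [m mS [<- _ _ <-]] := skel_In sub21 nS.
  exact: lo_walk_mono sub12 (walks1 m mS).
Qed.

Lemma skel_tombstone S d : map skel (tombstone S d) = map skel S.
Proof. by rewrite -map_comp; apply: eq_map => n /=; case: ifP. Qed.

Lemma skel_sub_rcons S n : {subset map skel S <= map skel (rcons S n)}.
Proof. by move=> k k_in; rewrite map_rcons mem_rcons in_cons k_in orbT. Qed.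

Definition insertable S n := [/\ npar n = None -> nside n,
  forall p, npar n = Some p -> p \in map (@nid V) S &
  lo_walk (rcons S n) (nid n) (nlo n)].

Lemma insertable_mono S1 S2 n : {subset map skel S1 <= map skel S2} ->
  insertable S1 n -> insertable S2 n.
Proof.
move=> sub [root_right par_in walk_n]; split=> //.
- move=> p /par_in; rewrite !ids_skel => /mapP [k k_in ->].
  by apply: map_f; apply: sub.
- apply: lo_walk_mono walk_n => k; rewrite !map_rcons !mem_rcons !in_cons.
  by case/orP=> [->|/sub ->]; rewrite ?orbT.
Qed.

Lemma tree_inv_rcons S n : tree_inv S -> nid n \notin map (@nid V) S ->
  insertable S n -> tree_inv (rcons S n).
Proof.
move=> [ids_uniq parents_first roots walks] fresh [root_right par_in walk_n].
have index_rcons x : x \in map (@nid V) S ->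
    index x (map (@nid V) (rcons S n)) = index x (map (@nid V) S).
  by move=> x_in; rewrite map_rcons -cats1 index_cat x_in.
split.
- by rewrite map_rcons rcons_uniq fresh.
- move=> m /In_rcons [mS|->] p par_m.
  + rewrite !index_rcons ?(In_map_mem _ mS) ?(parent_mem parents_first mS par_m) //.
    exact: parents_first.
  + rewrite index_rcons ?par_in // map_rcons -cats1 index_cat (negbTE fresh) /= eqxx.
    by rewrite addn0 index_mem par_in.
- by move=> m /In_rcons [mS|->]; [apply: roots|].
- by move=> m /In_rcons [mS|->] //; apply: lo_walk_mono (walks m mS); apply: skel_sub_rcons.
Qed.

End Skeleton.

Lemma mk_insert_insertable V a (S : seq (node V)) L r cnt i (x : V) :
  tree_inv S -> is_list_order a S L -> i <= size [seq d <- L | visible S d] ->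
  insertable S (mk_insert S L r cnt i x).
Proof.
move=> [_ parents_first roots _] list_order le_i.
have lo_in d : (if i is i'.+1 then Some (nth (0, 0) [seq d <- L | visible S d] i')
    else None) = Some d -> d \in L /\ d \in map (@nid V) S.
  case: i le_i => // i' lt_i' [d_eq].
  have := mem_nth (0, 0) lt_i'; rewrite d_eq mem_filter => /andP [_ d_in]; split=> //.
  have := @mem_trav V a S L (size S).+1 None d; rewrite -list_order.
  by case/(_ d_in).
rewrite /mk_insert; move: lo_in; set lo := (if i is _.+1 then _ else None) => lo_in.
clearbody lo; change (match lo with Some d => _ | None => _ end) with (next_in L lo).
case hasR: (has _ S) => /=.
- have [m [mS /andP [/eqP par_m side_m]]] := iffLR (List.existsb_exists _ _) hasR.
  have lo_L d : lo = Some d -> d \in L by case/lo_in.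
  have [y [-> walk_y]] := next_in_walk list_order parents_first roots lo_L
    (ex_intro2 _ _ m mS (conj par_m side_m)).
  split=> // [p [<-]|]; first exact: lo_walk_mem walk_y.
  apply: walk_left (lo_walk_mono (@skel_sub_rcons _ S _) walk_y) => //=.
  by apply/In_rcons; right.
- split=> // [p /lo_in []//|].
  by apply: walk_right => //; apply/In_rcons; right.
Qed.

Section Invariant.
Variables (V : Type) (a : algo).
Implicit Types (s : seq (msg V * seq nat)) (st : rstate V) (n : node V) (dl : seq nat).

(* The default of [nth] in [StDeliver]. *)
Definition nomsg : msg V * seq nat := (MDel V (0, 0), [::]).

Definition ins_at s j : option (node V) :=
  if (nth nomsg s j).1 is MIns n then Some n else None.

Definition delivered_skel s dl := pmap (fun j => omap (@skel V) (ins_at s j)) dl.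

(* [dl] lists the messages delivered at the sender before message [k] was sent; their
   insertions make up the sender's tree at that time, and causal delivery puts them in
   every receiver's tree before [k]. *)
Definition msg_ok s k n dl := {in dl, forall j, j < k} /\
  exists2 S0, map (@skel V) S0 = delivered_skel s dl & insertable S0 n.

Definition msgs_inv s :=
  (forall j1 j2 n1 n2, ins_at s j1 = Some n1 -> ins_at s j2 = Some n2 ->
     nid n1 = nid n2 -> j1 = j2) /\
  (forall k n dl, nth nomsg s k = (MIns n, dl) -> msg_ok s k n dl).

Record replica_inv s r st : Prop := ReplicaInv {
  replica_tree : tree_inv (rtree st);
  replica_dlv_sent : {in rdlv st, forall j, j < size s};
  replica_skel : map (@skel V) (rtree st) = delivered_skel s (rdlv st);
  replica_cnt : forall j n, ins_at s j = Some n -> (nid n).1 = r -> (nid n).2 < rcnt st }.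

Definition config_inv (c : config V) :=
  msgs_inv (csent c) /\ forall r, replica_inv (csent c) r (crep c r).

Lemma ins_at_rcons s e j : ins_at (rcons s e) j =
  if j < size s then ins_at s j
  else if j == size s then (if e.1 is MIns n then Some n else None) else None.
Proof. by rewrite /ins_at nth_rcons; case: ltnP => //; case: eqP. Qed.

Lemma ins_at_rconsP s e j n : ins_at (rcons s e) j = Some n ->
  j < size s /\ ins_at s j = Some n \/ j = size s /\ e.1 = MIns n.
Proof.
rewrite ins_at_rcons; case: ifP => [|_]; first by left.
by case: eqP => // ->; case: e.1 => // m [->]; right.
Qed.

Lemma delivered_skel_rcons s e dl : {in dl, forall j, j < size s} ->
  delivered_skel (rcons s e) dl = delivered_skel s dl.
Proof. by move=> dl_sent; apply: eq_in_pmap => j /dl_sent lt_j; rewrite ins_at_rcons lt_j. Qed.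

Lemma delivered_skel_sub s dl1 dl2 : {subset dl1 <= dl2} ->
  {subset delivered_skel s dl1 <= delivered_skel s dl2}.
Proof. by move=> sub k; rewrite !mem_pmap => /mapP [j /sub j_in ->]; apply: map_f. Qed.

Lemma replica_ids_sent s r st x : replica_inv s r st -> x \in map (@nid V) (rtree st) ->
  exists2 j, j \in rdlv st & exists2 n, ins_at s j = Some n & nid n = x.
Proof.
case=> _ _ skel_eq _; rewrite ids_skel skel_eq => /mapP [k].
rewrite mem_pmap => /mapP [j j_in]; case ins_j: (ins_at s j) => [n|] //= [->] ->.
by exists j => //; exists n.
Qed.

Lemma msg_ok_rcons s e k n dl : k <= size s -> msg_ok s k n dl -> msg_ok (rcons s e) k n dl.
Proof.
move=> le_k [dl_lt [S0 skel_S0 ins_n]]; split=> //; exists S0 => //.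
by rewrite delivered_skel_rcons // => j /dl_lt /leq_trans; apply.
Qed.

Lemma msgs_inv_rcons s e : msgs_inv s ->
  (forall n, e.1 = MIns n ->
     (forall j m, ins_at s j = Some m -> nid m <> nid n) /\ msg_ok s (size s) n e.2) ->
  msgs_inv (rcons s e).
Proof.
move=> [ids_inj msgs_ok] e_ok; split.
- move=> j1 j2 n1 n2 /ins_at_rconsP [[_ ins1]|[-> e1]] /ins_at_rconsP [[_ ins2]|[-> e2]] //.
  + exact: ids_inj ins1 ins2.
  + by move=> id12; have [fresh _] := e_ok _ e2; case: (fresh _ _ ins1).
  + by move=> id12; have [fresh _] := e_ok _ e1; case: (fresh _ _ ins2); rewrite id12.
- move=> k n dl; rewrite nth_rcons; case: ltnP => [lt_k /msgs_ok|le_k].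
    by apply: msg_ok_rcons; apply: ltnW.
  case: eqP => [->|_] // nth_k; rewrite nth_k in e_ok.
  by have [_ /(msg_ok_rcons e) ok] := e_ok n erefl; apply: ok.
Qed.

Lemma replica_inv_rcons s e r st : replica_inv s r st ->
  (forall n, e.1 = MIns n -> (nid n).1 = r -> (nid n).2 < rcnt st) ->
  replica_inv (rcons s e) r st.
Proof.
case=> tree_ok dlv_sent skel_eq cnt_ok e_ok; split=> //.
- by move=> j /dlv_sent lt_j; rewrite size_rcons ltnS ltnW.
- by rewrite delivered_skel_rcons.
- by move=> j n /ins_at_rconsP [[_ /cnt_ok]|[_ /e_ok]].
Qed.

Lemma replica_inv_bump s r st cnt : rcnt st <= cnt -> replica_inv s r st ->
  replica_inv s r {| rtree := rtree st; rcnt := cnt; rdlv := rdlv st |}.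
Proof.
move=> le_cnt [tree_ok dlv_sent skel_eq cnt_ok]; split=> // j n ins_j r_n.
exact: leq_trans (cnt_ok j n ins_j r_n) le_cnt.
Qed.

Lemma replica_inv_deliver s r st k e : msgs_inv s -> replica_inv s r st ->
  nth nomsg s k = e -> k < size s -> k \notin rdlv st -> {subset e.2 <= rdlv st} ->
  replica_inv s r {| rtree := apply_msg (rtree st) e.1; rcnt := rcnt st;
                     rdlv := rcons (rdlv st) k |}.
Proof.
move=> [ids_inj msgs_ok] inv_r nth_k lt_k k_new deps.
have [tree_ok dlv_sent skel_eq cnt_ok] := inv_r.
have skel_k : delivered_skel s (rcons (rdlv st) k) =
    map (@skel V) (rtree st) ++ (if e.1 is MIns n then [:: skel n] else [::]).
  by rewrite -cats1 /delivered_skel pmap_cat -/(delivered_skel _ _) -skel_eq /= /ins_at nth_k;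
    case: e.1.
split=> //=.
- case: e nth_k deps skel_k => [[n|d] deps_k] nth_k deps skel_k /=; last first.
    by apply: tree_inv_skel tree_ok; rewrite skel_tombstone.
  apply: tree_inv_rcons tree_ok _ _.
  + apply/negP => /(replica_ids_sent inv_r) [j j_in [m ins_j id_m]].
    have ins_k : ins_at s k = Some n by rewrite /ins_at nth_k.
    by move: k_new; rewrite -(ids_inj _ _ _ _ ins_j ins_k id_m) j_in.
  + have [_ [S0 skel_S0 ins_S0]] := msgs_ok _ _ _ nth_k.
    apply: insertable_mono ins_S0; rewrite skel_S0 skel_eq.
    exact: delivered_skel_sub.
- by move=> j; rewrite mem_rcons in_cons => /orP [/eqP ->|/dlv_sent].
- rewrite skel_k; case: e.1 => [n|d] /=; first by rewrite map_rcons cats1.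
  by rewrite skel_tombstone cats0.
Qed.

Lemma config_inv_upd s f r st : msgs_inv s ->
  (forall r', r' != r -> replica_inv s r' (f r')) -> replica_inv s r st ->
  config_inv {| csent := s; crep := upd f r st |}.
Proof.
move=> msgs others inv_r; split=> // r' /=; rewrite /upd.
by have [->|/others] := eqVneq r' r.
Qed.

Lemma config_inv_init : config_inv (init_config V).
Proof.
have ins_nil j : ins_at [::] j = None by rewrite /ins_at nth_nil.
split; first by split=> [j1 j2 n1 n2|k n dl]; rewrite ?ins_nil ?nth_nil.
by move=> r; split=> // [|j n]; [split | rewrite ins_nil].
Qed.

Lemma config_inv_broadcast (c : config V) r e cnt :
  config_inv c -> e.2 = rdlv (crep c r) -> rcnt (crep c r) <= cnt ->
  (forall n, e.1 = MIns n -> [/\ nid n = (r, rcnt (crep c r)), rcnt (crep c r) < cnt &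
                                 msg_ok (csent c) (size (csent c)) n e.2]) ->
  config_inv {| csent := rcons (csent c) e;
                crep := upd (crep c) r {| rtree := apply_msg (rtree (crep c r)) e.1;
                                         rcnt := cnt;
                                         rdlv := rcons (rdlv (crep c r)) (size (csent c)) |} |}.
Proof.
move=> [msgs replicas] deps le_cnt e_ok; have inv_r := replicas r.
have msgs' : msgs_inv (rcons (csent c) e).
  apply: msgs_inv_rcons msgs _ => n /e_ok [id_n _ ok]; split=> // j m ins_j id_m.
  by move: (replica_cnt inv_r ins_j); rewrite id_m id_n ltnn => /(_ erefl).
apply: (config_inv_upd msgs') => [r' r'_ne|].
  apply: replica_inv_rcons (replicas r') _ => n /e_ok [-> _ _] /= r_eq.
  by rewrite r_eq eqxx in r'_ne.
apply: replica_inv_deliver msgs' (replica_inv_rcons (replica_inv_bump le_cnt inv_r) _) _ _ _ _.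
- by move=> n /e_ok [-> lt_cnt _].
- by rewrite nth_rcons ltnn eqxx.
- by rewrite size_rcons.
- by apply/negP => /(replica_dlv_sent inv_r); rewrite ltnn.
- by rewrite deps.
Qed.

Lemma config_inv_step : forall c c' : config V, step a c c' -> config_inv c -> config_inv c'.
Proof.
move=> ? ? [].
- move=> c r i x L st list_order le_i n inv_c; have inv_r := proj2 inv_c r.
  apply: (config_inv_broadcast (e := (MIns n, rdlv st))) => // m [<-].
  split=> //; split; first exact: replica_dlv_sent inv_r.
  exists (rtree st); first exact: replica_skel inv_r.
  exact: mk_insert_insertable (replica_tree inv_r) list_order le_i.
- by move=> c r i L st _ vis _ d inv_c; apply: (config_inv_broadcast (e := (MDel V d, rdlv st))).
- move=> c r k st lt_k k_new e deps [msgs replicas].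
  apply: (config_inv_upd msgs) => [r' _|]; first exact: replicas.
  apply: replica_inv_deliver msgs (replicas r) _ lt_k k_new _ => //.
  by move=> j; apply: (allP deps).
Qed.

Lemma config_inv_reachable (c : config V) : reachable a c -> config_inv c.
Proof.
elim=> [|c0 c1 _ inv_c0 step_c]; first exact: config_inv_init.
exact: config_inv_step step_c inv_c0.
Qed.

End Invariant.

Theorem lemma4 (V : Type) (a : algo) (c : config V) (r : nat) :
  reachable a c ->
  let S := rtree (crep c r) in
  (forall D, List.In D S -> lo_walk S (nid D) (nlo D)) /\
  (forall L, is_list_order a S L ->
     forall A B, List.In A S -> List.In B S -> before L (nid A) (nid B) ->
       (desc (@npar V) S (nid A) (nid B) <-> desc (@nlo V) S (nid A) (nid B))).
Proof.
move=> /config_inv_reachable [_ /(_ r) [tree_ok _ _ _]] S.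
split; first exact: tree_walks tree_ok.
by move=> L list_order A B _ _; apply: tree_desc_npar_nlo tree_ok list_order.
Qed.
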